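(* Let $c\in C_{\mathrm{SAGE}}(A)$ and suppose the index set $N=\{i\in[m]: c_i<0\}$ is nonempty. Then there exist vectors $c^{(i)}\in C_{\mathrm{AGE}}(A,i)$, $i\in N$, such that $c=\sum_{i\in N}c^{(i)}$ and $c^{(i)}_j=0$ for all distinct $i,j\in N$.
   Context: Let $A\in\mathbb{R}^{n\times m}$ have distinct columns $a_1,\dots,a_m$. For $c\in\mathbb{R}^m$, $\mathrm{Sig}(A,c)$ denotes the function $x\mapsto\sum_{i=1}^m c_i\exp(a_i^\top x)$ on $\mathbb{R}^n$. $C_{\mathrm{NNS}}(A)=\{c\in\mathbb{R}^m:\mathrm{Sig}(A,c)(x)\ge 0\ \forall x\in\mathbb{R}^n\}$. For $k\in[m]$, the $k$-th AGE cone is $C_{\mathrm{AGE}}(A,k)=\{c\in C_{\mathrm{NNS}}(A): c_i\ge 0\ \forall i\ne k\}$, and the SAGE cone is the Minkowski sum $C_{\mathrm{SAGE}}(A)=\sum_{k=1}^m C_{\mathrm{AGE}}(A,k)$. *)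

From Stdlib Require Import Reals Arith.
Open Scope R_scope.

(* Vectors in R^n are represented as functions nat -> R; only indices < n matter.
   The matrix A in R^{n x m} is given by its columns a : nat -> (nat -> R),
   column i (for i < m) being a i. *)

Fixpoint fsum (m : nat) (f : nat -> R) : R :=
  match m with
  | O => 0
  | S k => fsum k f + f k
  end.

Definition fsum_if (m : nat) (P : nat -> Prop) (dec : forall i, {P i} + {~ P i})
  (f : nat -> R) : R :=
  fsum m (fun i => if dec i then f i else 0).

Definition dot (n : nat) (u x : nat -> R) : R := fsum n (fun k => u k * x k).

Definition distinct_cols (m : nat) (a : nat -> nat -> R) (n : nat) : Prop :=
  forall i j, (i < m)%nat -> (j < m)%nat -> i <> j ->
    exists k, (k < n)%nat /\ a i k <> a j k.

Definition Sig (n m : nat) (a : nat -> nat -> R) (c : nat -> R) (x : nat -> R) : R :=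
  fsum m (fun i => c i * exp (dot n (a i) x)).

Definition C_NNS (n m : nat) (a : nat -> nat -> R) (c : nat -> R) : Prop :=
  forall x : nat -> R, 0 <= Sig n m a c x.

Definition C_AGE (n m : nat) (a : nat -> nat -> R) (k : nat) (c : nat -> R) : Prop :=
  C_NNS n m a c /\ (forall i, (i < m)%nat -> i <> k -> 0 <= c i).

(* Minkowski sum of the m AGE cones (vectors compared on indices < m) *)
Definition C_SAGE (n m : nat) (a : nat -> nat -> R) (c : nat -> R) : Prop :=
  exists d : nat -> (nat -> R),
    (forall k, (k < m)%nat -> C_AGE n m a k (d k)) /\
    (forall j, (j < m)%nat -> c j = fsum m (fun k => d k j)).

Definition negIdx (m : nat) (c : nat -> R) (i : nat) : Prop := (i < m)%nat /\ c i < 0.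

Definition negIdx_dec (m : nat) (c : nat -> R) (i : nat) : {negIdx m c i} + {~ negIdx m c i}.
Proof.
  unfold negIdx.
  destruct (Compare_dec.lt_dec i m) as [H|H]; [|right; tauto].
  destruct (Rlt_dec (c i) 0) as [H'|H']; [left; tauto | right; tauto].
Defined.

(* Write c = sum_l e_l with e_l in C_AGE(A, l) and clean up the columns k = 0, ..., m-1 in
   turn by updates e_l := e_l + lam_l e_k with sum_l lam_l = 0, which preserve the sum.
   Such an update stays in the AGE cones as long as lam_l >= 0 for l <> k, 1 + lam_k >= 0,
   and the new k-th entries e_l k + lam_l e_k k of the l <> k stay nonnegative.
   If c_k < 0, spreading e_k over the other cones proportionally to their k-th entries
   cancels those entries; if c_k >= 0, the same spreading (or, when all those entries
   vanish and e_k is therefore nonnegative, a transfer of e_k to a cone with negative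
   index) empties e_k.  Cleaning column k does not disturb the columns already cleaned. *)
From Stdlib Require Import Reals Lra Lia Arith.
Open Scope R_scope.

Lemma fsum_ext m f g : (forall i, (i < m)%nat -> f i = g i) -> fsum m f = fsum m g.
Proof.
  induction m as [|m IH]; intros H; simpl; [reflexivity|].
  rewrite IH by (intros; apply H; lia). rewrite H by lia. reflexivity.
Qed.

Lemma fsum_add m f g : fsum m (fun i => f i + g i) = fsum m f + fsum m g.
Proof. induction m as [|m IH]; simpl; [ring | rewrite IH; ring]. Qed.

Lemma fsum_scal m t f : fsum m (fun i => t * f i) = t * fsum m f.
Proof. induction m as [|m IH]; simpl; [ring | rewrite IH; ring]. Qed.

Lemma fsum_nonneg m f : (forall i, (i < m)%nat -> 0 <= f i) -> 0 <= fsum m f.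
Proof.
  induction m as [|m IH]; intros H; simpl; [lra|].
  assert (0 <= fsum m f) by (apply IH; intros; apply H; lia).
  assert (0 <= f m) by (apply H; lia). lra.
Qed.

Lemma fsum_remove m f k : (k < m)%nat ->
  fsum m f = fsum m (fun l => if Nat.eq_dec l k then 0 else f l) + f k.
Proof.
  induction m as [|m IH]; intros Hk; [lia|]. simpl.
  destruct (Nat.eq_dec m k) as [->|Hne].
  - rewrite (fsum_ext k (fun l => if Nat.eq_dec l k then 0 else f l) f); [ring|].
    intros i Hi. destruct (Nat.eq_dec i k); [lia | reflexivity].
  - rewrite (IH ltac:(lia)). ring.
Qed.

Lemma fsum_delta m i : (i < m)%nat ->
  fsum m (fun l => if Nat.eq_dec l i then 1 else 0) = 1.
Proof.
  intros Hi. rewrite (fsum_remove _ _ i Hi), (fsum_ext _ _ (fun _ => 0 * 0)).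
  - rewrite fsum_scal. destruct (Nat.eq_dec i i); [ring | congruence].
  - intros l _. destruct (Nat.eq_dec l i); ring.
Qed.

Lemma Sig_add_scal n m a u v t x :
  Sig n m a (fun i => u i + t * v i) x = Sig n m a u x + t * Sig n m a v x.
Proof.
  unfold Sig. rewrite <- fsum_scal, <- fsum_add.
  apply fsum_ext. intros; ring.
Qed.

Section AgeDecomposition.

Variables (n m : nat) (a : nat -> nat -> R).

Definition age_decomposition (c : nat -> R) (e : nat -> nat -> R) : Prop :=
  (forall l, (l < m)%nat -> C_AGE n m a l (e l)) /\
  (forall j, (j < m)%nat -> c j = fsum m (fun l => e l j)).

Definition settled_at (c : nat -> R) (e : nat -> nat -> R) (k : nat) : Prop :=
  (0 <= c k -> forall j, e k j = 0) /\
  (c k < 0 -> forall l, (l < m)%nat -> l <> k -> e l k = 0).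

Definition mix (e : nat -> nat -> R) (k : nat) (lam : nat -> R) : nat -> nat -> R :=
  fun l j => e l j + lam l * e k j.

Lemma mix_decomposition c e k lam :
  age_decomposition c e -> (k < m)%nat ->
  fsum m lam = 0 ->
  (forall l, (l < m)%nat -> l <> k -> 0 <= lam l) ->
  0 <= 1 + lam k ->
  (forall l, (l < m)%nat -> l <> k -> 0 <= e l k + lam l * e k k) ->
  age_decomposition c (mix e k lam).
Proof.
  intros [Hage Hsum] Hk Hlam_sum Hlam Hlam_k Hcol. unfold mix. split.
  - intros l Hl.
    destruct (Hage l Hl) as [Hnns_l Hsign_l], (Hage k Hk) as [Hnns_k Hsign_k]. split.
    + intros x. rewrite Sig_add_scal.
      specialize (Hnns_l x). specialize (Hnns_k x).
      destruct (Nat.eq_dec l k) as [->|Hne]; [nra|].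
      specialize (Hlam l Hl Hne). nra.
    + intros j Hj Hjl. destruct (Nat.eq_dec l k) as [->|Hne].
      * specialize (Hsign_k j Hj Hjl). nra.
      * destruct (Nat.eq_dec j k) as [->|Hjk]; [now apply Hcol|].
        specialize (Hsign_l j Hj Hjl). specialize (Hsign_k j Hj Hjk).
        specialize (Hlam l Hl Hne). nra.
  - intros j Hj. rewrite (Hsum j Hj), fsum_add.
    rewrite (fsum_ext _ (fun l => lam l * e k j) (fun l => e k j * lam l)) by (intros; ring).
    rewrite fsum_scal, Hlam_sum. ring.
Qed.

Lemma mix_settled_at c e k lam k' :
  settled_at c e k' -> (k < m)%nat -> k <> k' ->
  (0 <= c k' -> lam k' = 0) -> settled_at c (mix e k lam) k'.
Proof.
  intros [Hpos Hneg] Hk Hkk' Hlam. unfold mix. split.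
  - intros Hc j. rewrite Hpos, Hlam by exact Hc. ring.
  - intros Hc l Hl Hlk'. rewrite (Hneg Hc l Hl Hlk'), (Hneg Hc k Hk Hkk'). ring.
Qed.

Lemma settle_by_mix c e k lam :
  (k < m)%nat ->
  (forall k', (k' < k)%nat -> settled_at c e k') ->
  (forall k', (k' < k)%nat -> 0 <= c k' -> lam k' = 0) ->
  age_decomposition c (mix e k lam) -> settled_at c (mix e k lam) k ->
  exists e', age_decomposition c e' /\ (forall k', (k' < S k)%nat -> settled_at c e' k').
Proof.
  intros Hk Hsettled Hlam Hdec Hnew. exists (mix e k lam). split; [exact Hdec|].
  intros k' Hk'. destruct (Nat.eq_dec k' k) as [->|Hne]; [exact Hnew|].
  apply mix_settled_at; [apply Hsettled; lia | exact Hk | congruence | apply Hlam; lia].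
Qed.

Definition offdiag_mass (e : nat -> nat -> R) (k : nat) : R :=
  fsum m (fun l => if Nat.eq_dec l k then 0 else e l k).

Lemma offdiag_mass_nonneg c e k :
  age_decomposition c e -> (k < m)%nat -> 0 <= offdiag_mass e k.
Proof.
  intros [Hage _] Hk. apply fsum_nonneg. intros l Hl.
  destruct (Nat.eq_dec l k) as [_|Hne]; [lra|]. apply (proj2 (Hage l Hl)); auto.
Qed.

Lemma coef_offdiag_mass c e k : age_decomposition c e -> (k < m)%nat ->
  c k = offdiag_mass e k + e k k.
Proof. intros [_ Hsum] Hk. rewrite (Hsum k Hk). exact (fsum_remove _ _ k Hk). Qed.

Definition proportional_weights (e : nat -> nat -> R) (k : nat) (s : R) : nat -> R :=
  fun l => if Nat.eq_dec l k then - offdiag_mass e k / s else / s * e l k.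

Lemma proportional_decomposition c e k s :
  age_decomposition c e -> (k < m)%nat -> 0 < s ->
  offdiag_mass e k <= s -> 0 <= s + e k k ->
  age_decomposition c (mix e k (proportional_weights e k s)).
Proof.
  intros Hdec Hk Hs HT Hkk. unfold proportional_weights.
  assert (Hoff : forall l, (l < m)%nat -> l <> k -> 0 <= e l k)
    by (intros l Hl Hne; apply (proj2 (proj1 Hdec l Hl)); auto).
  apply mix_decomposition; auto.
  - rewrite (fsum_remove _ _ k Hk).
    rewrite (fsum_ext _ _ (fun l => / s * (if Nat.eq_dec l k then 0 else e l k))).
    + rewrite fsum_scal. fold (offdiag_mass e k).
      destruct (Nat.eq_dec k k); [field; lra | congruence].
    + intros l _. destruct (Nat.eq_dec l k); ring.
  - intros l Hl Hne. destruct (Nat.eq_dec l k); [congruence|].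
    apply Rmult_le_pos; [apply Rlt_le, Rinv_0_lt_compat |]; auto.
  - destruct (Nat.eq_dec k k) as [_|]; [|congruence].
    replace (1 + - offdiag_mass e k / s) with ((s - offdiag_mass e k) * / s) by (field; lra).
    apply Rmult_le_pos; [lra | apply Rlt_le, Rinv_0_lt_compat; lra].
  - intros l Hl Hne. destruct (Nat.eq_dec l k); [congruence|].
    replace (e l k + / s * e l k * e k k) with (e l k * ((s + e k k) * / s)) by (field; lra).
    apply Rmult_le_pos; [auto|].
    apply Rmult_le_pos; [lra | apply Rlt_le, Rinv_0_lt_compat; lra].
Qed.

Lemma proportional_weights_settled c e k s k' :
  settled_at c e k' -> k' <> k -> 0 <= c k' -> proportional_weights e k s k' = 0.
Proof.
  intros [Hpos _] Hne Hc. unfold proportional_weights.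
  destruct (Nat.eq_dec k' k); [congruence|]. rewrite (Hpos Hc). ring.
Qed.

Definition transfer_weights (k i : nat) : nat -> R :=
  fun l => (if Nat.eq_dec l i then 1 else 0) - (if Nat.eq_dec l k then 1 else 0).

Lemma transfer_decomposition c e k i :
  age_decomposition c e -> (k < m)%nat -> (i < m)%nat -> i <> k -> 0 <= e k k ->
  age_decomposition c (mix e k (transfer_weights k i)).
Proof.
  intros Hdec Hk Hi Hik Hkk. unfold transfer_weights.
  apply mix_decomposition; auto.
  - unfold Rminus. rewrite fsum_add.
    rewrite (fsum_ext _ (fun l => - _) (fun l => -1 * (if Nat.eq_dec l k then 1 else 0)))
      by (intros; ring).
    rewrite fsum_scal, !fsum_delta by assumption. ring.
  - intros l Hl Hne. destruct (Nat.eq_dec l k); [congruence|].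
    destruct (Nat.eq_dec l i); lra.
  - destruct (Nat.eq_dec k i), (Nat.eq_dec k k); lra.
  - intros l Hl Hne. assert (0 <= e l k) by (apply (proj2 (proj1 Hdec l Hl)); auto).
    destruct (Nat.eq_dec l k); [congruence|]. destruct (Nat.eq_dec l i); nra.
Qed.

Lemma settle_index c e k :
  age_decomposition c e -> (k < m)%nat -> (exists i, negIdx m c i) ->
  (forall k', (k' < k)%nat -> settled_at c e k') ->
  exists e', age_decomposition c e' /\ (forall k', (k' < S k)%nat -> settled_at c e' k').
Proof.
  intros Hdec Hk [i [Hi Hci]] Hsettled.
  pose proof (offdiag_mass_nonneg c e k Hdec Hk) as HT.
  pose proof (coef_offdiag_mass c e k Hdec Hk) as Hck.
  destruct (Rlt_dec (c k) 0) as [Hneg|Hpos].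
  - apply (settle_by_mix c e k (proportional_weights e k (- e k k))); auto.
    + intros k' Hk' Hc. apply (proportional_weights_settled c); [apply Hsettled | lia |]; auto.
    + apply proportional_decomposition; auto; lra.
    + split; [lra|]. intros _ l Hl Hne. unfold mix, proportional_weights.
      destruct (Nat.eq_dec l k); [congruence|]. field. lra.
  - destruct (Rlt_dec 0 (offdiag_mass e k)) as [HTpos|HTzero].
    + apply (settle_by_mix c e k (proportional_weights e k (offdiag_mass e k))); auto.
      * intros k' Hk' Hc. apply (proportional_weights_settled c); [apply Hsettled | lia |]; auto.
      * apply proportional_decomposition; auto; lra.
      * split; [|lra]. intros _ j. unfold mix, proportional_weights.
        destruct (Nat.eq_dec k k); [field; lra | congruence].
    + assert (Hik : i <> k) by (intros ->; lra).
      apply (settle_by_mix c e k (transfer_weights k i)); auto.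
      * intros k' Hk' Hc. unfold transfer_weights.
        destruct (Nat.eq_dec k' i) as [->|]; [lra|].
        destruct (Nat.eq_dec k' k); [lia | ring].
      * apply transfer_decomposition; auto; lra.
      * split; [|lra]. intros _ j. unfold mix, transfer_weights.
        destruct (Nat.eq_dec k i); [congruence|]. destruct (Nat.eq_dec k k); [ring | congruence].
Qed.

Lemma settled_decomposition_exists c :
  C_SAGE n m a c -> (exists i, negIdx m c i) ->
  forall p, (p <= m)%nat ->
  exists e, age_decomposition c e /\ (forall k, (k < p)%nat -> settled_at c e k).
Proof.
  intros [d Hd] HN p. induction p as [|k IH]; intros Hp.
  - exists d. split; [exact Hd | intros; lia].
  - destruct (IH ltac:(lia)) as [e [Hdec Hsettled]].
    apply (settle_index c e k); auto.
Qed.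

End AgeDecomposition.

Theorem mainTheorem2 (n m : nat) (a : nat -> nat -> R) (c : nat -> R)
  (Hdist : distinct_cols m a n)
  (Hc : C_SAGE n m a c)
  (HN : exists i, negIdx m c i) :
  exists d : nat -> (nat -> R),
    (forall i, negIdx m c i -> C_AGE n m a i (d i)) /\
    (forall j, (j < m)%nat -> c j = fsum_if m (negIdx m c) (negIdx_dec m c) (fun i => d i j)) /\
    (forall i j, negIdx m c i -> negIdx m c j -> i <> j -> d i j = 0).
Proof.
  destruct (settled_decomposition_exists n m a c Hc HN m (le_n m))
    as [e [[Hage Hsum] Hsettled]].
  exists e. split; [|split].
  - intros i [Hi _]. now apply Hage.
  - intros j Hj. rewrite (Hsum j Hj). unfold fsum_if. apply fsum_ext.
    intros l Hl. destruct (negIdx_dec m c l) as [_|Hnot]; [reflexivity|].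
    rewrite (proj1 (Hsettled l Hl)); [reflexivity|].
    destruct (Rlt_dec (c l) 0); [unfold negIdx in Hnot; tauto | lra].
  - intros i j [Hi Hci] [Hj Hcj] Hij. now apply (proj2 (Hsettled j Hj)).
Qed.
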